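(* Let $(X,r)$ be a non-degenerate involutive set-theoretic solution of the Yang–Baxter equation with $|X|=n$, identified with $\{1,\dots,n\}$. If $(X,r)$ is irretractable, indecomposable and satisfies condition $(\mathfrak{C})$ — there exists a natural number $\ell$ such that for every $1\le s\le n$ there exist $1\le i_1,\dots,i_\ell\le n$ with $\sigma_{i_1}\cdots\sigma_{i_\ell}(1)=s$ — then for every natural number $k\ge1$ there exists a non-degenerate involutive set-theoretic solution of size $n^{2^k}$ that is also irretractable and indecomposable.
   Context: A set-theoretic solution of the Yang–Baxter equation is a pair $(X,r)$ with $r:X\times X\to X\times X$, $r(x,y)=(\sigma_x(y),\gamma_y(x))$, satisfying $r^{12}r^{23}r^{12}=r^{23}r^{12}r^{23}$ on $X^3$ ($r^{12}=r\times\mathrm{Id}_X$, $r^{23}=\mathrm{Id}_X\times r$). Non-degenerate: all $\sigma_x,\gamma_x$ bijective; involutive: $r\circ r=\mathrm{Id}$. A subset $Y$ is non-degenerate invariant if $r(Y\times Y)\subseteq Y\times Y$ and $(Y,r|_{Y^2})$ is a non-degenerate involutive solution; $(X,r)$ is decomposable if $X$ is a union of two non-empty disjoint non-degenerate invariant subsets, indecomposable otherwise. Retraction: $x\sim y$ iff $\sigma_x=\sigma_y$, $\mathrm{Ret}(X,r)=(X/\!\sim,r')$ with $r'([x],[y])=([\sigma_x(y)],[\gamma_y(x)])$; $(X,r)$ is irretractable if there is no natural number $\ell$ with $|\mathrm{Ret}^\ell(X,r)|=1$ (where $\mathrm{Ret}^k=\mathrm{Ret}(\mathrm{Ret}^{k-1})$).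 *)

From mathcomp Require Import all_boot.
Set Implicit Arguments. Unset Strict Implicit. Unset Printing Implicit Defensive.

Section Sol.
Variables (X : finType) (r : X * X -> X * X).

Definition sigm (x : X) : X -> X := fun y => (r (x, y)).1.
Definition gamm (y : X) : X -> X := fun x => (r (x, y)).2.

Definition r12 (t : X * X * X) : X * X * X :=
  let: (x, y, z) := t in ((r (x, y)).1, (r (x, y)).2, z).
Definition r23 (t : X * X * X) : X * X * X :=
  let: (x, y, z) := t in (x, (r (y, z)).1, (r (y, z)).2).

Definition YBE : Prop := forall t, r12 (r23 (r12 t)) = r23 (r12 (r23 t)).
Definition nondegenerate : Prop :=
  forall x, bijective (sigm x) /\ bijective (gamm x).
Definition involutive_sol : Prop := forall p, r (r p) = p.

Definition ndi_solution : Prop := [/\ YBE, nondegenerate & involutive_sol].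

Definition bij_on (Y : {set X}) (f : X -> X) : Prop :=
  {in Y, forall y, f y \in Y} /\ {in Y &, injective f} /\
  (forall z, z \in Y -> exists2 y, y \in Y & f y = z).

(* Y is a non-degenerate invariant subset: r(Y x Y) ⊆ Y x Y and the
   restriction (Y, r|_{Y^2}) is a non-degenerate involutive solution
   (all conditions written out on elements of Y). *)
Definition nd_invariant (Y : {set X}) : Prop :=
  [/\ (forall x y, x \in Y -> y \in Y -> (r (x, y)).1 \in Y /\ (r (x, y)).2 \in Y),
      (forall x y z, x \in Y -> y \in Y -> z \in Y ->
          r12 (r23 (r12 (x, y, z))) = r23 (r12 (r23 (x, y, z)))),
      (forall x, x \in Y -> bij_on Y (sigm x) /\ bij_on Y (gamm x)) &
      (forall x y, x \in Y -> y \in Y -> r (r (x, y)) = (x, y))].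

Definition decomposable : Prop :=
  exists Y1 Y2 : {set X},
    [/\ Y1 != set0, Y2 != set0, [disjoint Y1 & Y2] & Y1 :|: Y2 = setT] /\
    nd_invariant Y1 /\ nd_invariant Y2.
Definition indecomposable : Prop := ~ decomposable.

End Sol.

(* Finite "solution structures" (carrier + map), to iterate the retraction. *)
Record fsol := FSol { fcar : finType; fr : fcar * fcar -> fcar * fcar }.

Section Retraction.
Variable S : fsol.
Local Notation X := (fcar S).
Local Notation r := (@fr S).

Definition ret_cls (x : X) : {set X} :=
  [set y | [forall z, sigm r y z == sigm r x z]].

Definition ret_pred (A : {set X}) : bool := [exists x, A == ret_cls x].
Definition RetT : finType := {A : {set X} | ret_pred A}.

Lemma ret_cls_pred (z : X) : ret_pred (ret_cls z).
Proof. by apply/existsP; exists z. Qed.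

Definition ret_elt (z : X) : RetT := exist _ (ret_cls z) (ret_cls_pred z).

Definition ret_rep (A : RetT) : X := xchoose (existsP (valP A)).

Definition ret_r (p : RetT * RetT) : RetT * RetT :=
  let x := ret_rep p.1 in let y := ret_rep p.2 in
  (ret_elt (sigm r x y), ret_elt (gamm r y x)).

Definition Ret : fsol := @FSol RetT ret_r.
End Retraction.

Definition irretractable (X : finType) (r : X * X -> X * X) : Prop :=
  ~ exists l : nat, #|fcar (iter l Ret (@FSol X r))| = 1.

(* condition (C) for X = {1..n} ~ 'I_n, with "1" the element one : 'I_n:
   sigma_{i_1} ... sigma_{i_l}(1) = s *)
Definition condC (n : nat) (r : 'I_n * 'I_n -> 'I_n * 'I_n) (one : 'I_n) : Prop :=
  exists l : nat, forall s : 'I_n, exists ix : seq 'I_n,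
    size ix = l /\ foldr (fun i x => sigm r i x) one ix = s.

From mathcomp Require Import all_boot.
Set Implicit Arguments. Unset Strict Implicit. Unset Printing Implicit Defensive.

(* The solutions are the iterated direct squares (X^(2^k), r x ... x r).
   Condition (C) with a word length l passes to X x X by zipping two words of
   length l, and (C) alone forces indecomposability: a part of a decomposition
   is closed under sigma-preimages, so it contains the base point 1.
   Irretractability passes to X x X because the first projection is a
   surjective morphism of the sigma-structures, retraction carries surjective
   morphisms to surjective morphisms, and so a one-point Ret^l(X x X) would
   force a one-point Ret^l(X). *)

Definition sg (S : fsol) : fcar S -> fcar S -> fcar S := sigm (@fr S).

(* The two consequences of being a non-degenerate involutive solution that the
   retraction needs: every sigma_x is injective, and
   sigma_(sigma_x a) sigma_b = sigma_x sigma_a for b = gamma_a x, which by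
   involutivity is the b with sigma_(sigma_x a) b = x. *)
Definition sigma_ybe (S : fsol) : Prop :=
  (forall x : fcar S, injective (sg x)) /\
  (forall x a b : fcar S, sg (sg x a) b = x ->
     forall v, sg (sg x a) (sg b v) = sg x (sg a v)).

Lemma sigma_ybe_ndi (X : finType) (r : X * X -> X * X) :
  ndi_solution r -> sigma_ybe (FSol r).
Proof.
case=> ybe nondeg invol; split=> [x|x a b sg_b v].
  exact: bij_inj (nondeg x).1.
have sg_gamm : sigm r (sigm r x a) (gamm r a x) = x.
  by have := invol (x, a); rewrite /sigm /gamm; case: (r (x, a)) => p q /= ->.
have -> : b = gamm r a x.
  by apply: (bij_inj (nondeg (sigm r x a)).1); rewrite [LHS]sg_b sg_gamm.
exact: (congr1 (fun t => t.1.1) (ybe (x, a, v))).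
Qed.

Section RetractionTheory.
Variable S : fsol.
Local Notation X := (fcar S).

Lemma eq_ret_elt (x y : X) : ret_elt x = ret_elt y <-> sg x =1 sg y.
Proof.
split=> [/(congr1 val) /= cls_xy z | sg_xy].
  have : y \in ret_cls y by rewrite inE; apply/forallP.
  by rewrite -cls_xy inE => /forallP /(_ z) /eqP.
apply: val_inj; apply/setP => w; rewrite !inE.
apply/forallP/forallP => sg_w z; rewrite (eqP (sg_w z)); apply/eqP.
  exact: sg_xy.
exact/esym/sg_xy.
Qed.

Lemma ret_repK (A : RetT S) : ret_elt (ret_rep A) = A.
Proof. by apply: val_inj; apply/esym/eqP; apply: (xchooseP (existsP (valP A))). Qed.

Lemma ret_rep_elt (x : X) : sg (ret_rep (ret_elt x)) =1 sg x.
Proof. by apply/eq_ret_elt; rewrite ret_repK. Qed.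

Lemma ret_eltP (A : RetT S) : exists x, A = ret_elt x.
Proof. by exists (ret_rep A); rewrite ret_repK. Qed.

Hypothesis sS : sigma_ybe S.

Lemma sg_surj (x z : X) : exists u, sg x u = z.
Proof. by have [g _ gK] := injF_bij (sS.1 x); exists (g z). Qed.

Lemma sg_ret_cancel (z u u' : X) : sg (sg z u) =1 sg (sg z u') -> sg u =1 sg u'.
Proof.
move=> sg_uu' v; apply: (sS.1 z).
have [b sg_b] := sg_surj (sg z u) z.
have sg_b' : sg (sg z u') b = z by rewrite -sg_uu'.
by rewrite -(sS.2 _ _ _ sg_b) -(sS.2 _ _ _ sg_b') sg_uu'.
Qed.

(* The injective map (u, u') |-> (sg z u, sg z u') pulls the finite relation
   "same sigma" back into itself by [sg_ret_cancel]; counting shows that the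
   preimage is the whole relation, which is the converse implication. *)
Lemma sg_ret_congr (z u u' : X) : sg u =1 sg u' -> sg (sg z u) =1 sg (sg z u').
Proof.
pose R := [set p : X * X | [forall w, sg p.1 w == sg p.2 w]].
have RP p : reflect (sg p.1 =1 sg p.2) (p \in R).
  by rewrite inE; apply: (iffP forallP) => E w; [apply/eqP | rewrite E].
pose g (p : X * X) := (sg z p.1, sg z p.2).
have g_inj : injective g by move=> [p1 p2] [q1 q2] [/(sS.1 z) -> /(sS.1 z) ->].
have preR : g @^-1: R \subset R.
  by apply/subsetP => p; rewrite inE => /RP /sg_ret_cancel /RP.
move=> sg_uu'; apply/(RP (g (u, u'))).
have : (u, u') \in R by apply/RP.
by rewrite -(subset_cardP (card_preimset R g_inj) preR) inE.
Qed.

Lemma sg_ret_elt (x y : X) : @sg (Ret S) (ret_elt x) (ret_elt y) = ret_elt (sg x y).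
Proof.
apply/eq_ret_elt => w; rewrite -/(sg _ _) ret_rep_elt.
exact/sg_ret_congr/ret_rep_elt.
Qed.

Lemma sigma_ybe_Ret : sigma_ybe (Ret S).
Proof.
split=> [A B B' | A B C].
  have [a ->] := ret_eltP A; have [u ->] := ret_eltP B; have [u' ->] := ret_eltP B'.
  by rewrite !sg_ret_elt => /eq_ret_elt /sg_ret_cancel /eq_ret_elt.
have [x ->] := ret_eltP A; have [a ->] := ret_eltP B; have [b ->] := ret_eltP C.
rewrite !sg_ret_elt => /eq_ret_elt sg_b V; have [v ->] := ret_eltP V.
rewrite !sg_ret_elt; congr ret_elt.
have [b0 sg_b0] := sg_surj (sg x a) x.
have -> : sg b =1 sg b0 by apply: (@sg_ret_cancel (sg x a)) => w; rewrite sg_b sg_b0.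
exact: sS.2.
Qed.

End RetractionTheory.

Lemma sigma_ybe_iter (S : fsol) l : sigma_ybe S -> sigma_ybe (iter l Ret S).
Proof. by move=> sS; elim: l => //= l; apply: sigma_ybe_Ret. Qed.

Definition sg_epi (S T : fsol) (h : fcar S -> fcar T) : Prop :=
  (forall t, exists s, h s = t) /\ (forall x y, h (sg x y) = sg (h x) (h y)).

Lemma sg_epi_Ret (S T : fsol) (h : fcar S -> fcar T) :
  sigma_ybe S -> sigma_ybe T -> sg_epi h ->
  exists H : fcar (Ret S) -> fcar (Ret T), sg_epi H.
Proof.
move=> sS sT [h_surj h_sg].
have h_ret x : ret_elt (h (ret_rep (ret_elt x))) = ret_elt (h x).
  by apply/eq_ret_elt => z; have [s <-] := h_surj z; rewrite -!h_sg ret_rep_elt.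
exists (fun A => ret_elt (h (ret_rep A))); split.
  move=> B; have [t ->] := ret_eltP B; have [s <-] := h_surj t.
  by exists (ret_elt s); rewrite h_ret.
move=> A B; have [x ->] := ret_eltP A; have [y ->] := ret_eltP B.
by rewrite (sg_ret_elt sS) !h_ret h_sg (sg_ret_elt sT).
Qed.

Lemma sg_epi_iter (S T : fsol) (h : fcar S -> fcar T) l :
  sigma_ybe S -> sigma_ybe T -> sg_epi h ->
  exists H : fcar (iter l Ret S) -> fcar (iter l Ret T), sg_epi H.
Proof.
move=> sS sT h_epi; elim: l => [|l [H H_epi]] /=; first by exists h.
exact: sg_epi_Ret (sigma_ybe_iter l sS) (sigma_ybe_iter l sT) H_epi.
Qed.

Lemma card_surj1 (A B : finType) (h : A -> B) :
  (forall b, exists a, h a = b) -> #|A| = 1 -> #|B| = 1.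
Proof.
move=> h_surj /fintype1 [a0 A_a0]; apply: (@eq_card1 _ (h a0)) => b.
by have [a <-] := h_surj b; rewrite !inE A_a0 eqxx.
Qed.

Lemma irretractable_epi (X Y : finType) (r : X * X -> X * X) (s : Y * Y -> Y * Y)
    (h : Y -> X) :
  ndi_solution r -> ndi_solution s -> @sg_epi (FSol s) (FSol r) h ->
  irretractable r -> irretractable s.
Proof.
move=> sol_r sol_s h_epi irr_r [l Ret_s1]; apply: irr_r; exists l.
have [H [H_surj _]] := sg_epi_iter l (sigma_ybe_ndi sol_s) (sigma_ybe_ndi sol_r) h_epi.
exact: card_surj1 H_surj Ret_s1.
Qed.

Lemma bij_pair (A A' B B' : Type) (f : A -> A') (g : B -> B') :
  bijective f -> bijective g -> bijective (fun p : A * B => (f p.1, g p.2)).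
Proof.
move=> [f' fK f'K] [g' gK g'K].
by exists (fun p => (f' p.1, g' p.2)) => -[a b] /=; rewrite ?fK ?gK ?f'K ?g'K.
Qed.

Section DirectProduct.
Variables (X Y : finType) (r : X * X -> X * X) (s : Y * Y -> Y * Y).

Definition prod_sol (p : (X * Y) * (X * Y)) : (X * Y) * (X * Y) :=
  (((r (p.1.1, p.2.1)).1, (s (p.1.2, p.2.2)).1),
   ((r (p.1.1, p.2.1)).2, (s (p.1.2, p.2.2)).2)).

Lemma ndi_prod_sol : ndi_solution r -> ndi_solution s -> ndi_solution prod_sol.
Proof.
move=> [ybe_r nd_r inv_r] [ybe_s nd_s inv_s]; split.
- move=> [[[a b] [c d]] [e f]].
  by have := ybe_r (a, c, e); have := ybe_s (b, d, f);
    rewrite /r12 /r23 /prod_sol /= => -[-> -> ->] [-> -> ->].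
- by move=> [a b]; split; [exact: bij_pair (nd_r a).1 (nd_s b).1
    | exact: bij_pair (nd_r a).2 (nd_s b).2].
- move=> [[a b] [c d]]; rewrite /prod_sol /=.
  by have := inv_r (a, c); have := inv_s (b, d);
    case: (r (a, c)) => p1 p2; case: (s (b, d)) => q1 q2 /= -> ->.
Qed.

Lemma sg_epi_fst : Y -> @sg_epi (FSol prod_sol) (FSol r) fst.
Proof. by move=> y0; split=> // x; exists (x, y0). Qed.

End DirectProduct.

(* Condition (C) on an arbitrary finite set, with the word length fixed.
   [condC] is [exists l, sigma_words r one l] on 'I_n. *)
Definition sigma_words (X : finType) (r : X * X -> X * X) (one : X) (l : nat) :=
  forall x : X, exists ix : seq X,
    size ix = l /\ foldr (fun i y => sigm r i y) one ix = x.

Lemma foldr_sigm_zip (X Y : finType) (r : X * X -> X * X) (s : Y * Y -> Y * Y)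
    (x0 : X) (y0 : Y) (ix : seq X) (iy : seq Y) :
  size ix = size iy ->
  foldr (fun i p => sigm (prod_sol r s) i p) (x0, y0) (zip ix iy) =
  (foldr (fun i x => sigm r i x) x0 ix, foldr (fun i y => sigm s i y) y0 iy).
Proof. by elim: ix iy => [|a ix IH] [|b iy] //= [/IH ->]. Qed.

Lemma sigma_words_prod (X Y : finType) (r : X * X -> X * X) (s : Y * Y -> Y * Y)
    (x0 : X) (y0 : Y) l :
  sigma_words r x0 l -> sigma_words s y0 l -> sigma_words (prod_sol r s) (x0, y0) l.
Proof.
move=> words_r words_s [x y].
have [ix [size_ix <-]] := words_r x; have [iy [size_iy <-]] := words_s y.
exists (zip ix iy); rewrite size_zip size_ix size_iy minnn.
by rewrite foldr_sigm_zip ?size_ix.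
Qed.

Section ConditionC.
Variables (X : finType) (r : X * X -> X * X).

Lemma nd_invariant_sigm_closed (Y Y' : {set X}) (x y : X) :
  nondegenerate r -> nd_invariant r Y -> nd_invariant r Y' ->
  [disjoint Y & Y'] -> Y :|: Y' = setT -> sigm r x y \in Y -> y \in Y.
Proof.
move=> nd [_ _ bij_Y _] [_ _ bij_Y' _] disj cover sg_y.
have : x \in Y :|: Y' by rewrite cover inE.
rewrite inE => /orP [xY | xY'].
  have [_ [_ Y_onto]] := (bij_Y x xY).1; have [y' y'Y sg_y'] := Y_onto _ sg_y.
  by rewrite -(bij_inj (nd x).1 sg_y').
apply: contraTT sg_y => yNY; rewrite (disjointFl disj) //.
have : y \in Y :|: Y' by rewrite cover inE.
by rewrite inE (negbTE yNY) => /((bij_Y' x xY').1.1 y).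
Qed.

Lemma sigma_words_mem (one : X) l (Y : {set X}) :
  sigma_words r one l -> (forall x y, sigm r x y \in Y -> y \in Y) ->
  Y != set0 -> one \in Y.
Proof.
move=> words Y_closed /set0Pn [p pY]; have [ix [_ foldr_p]] := words p.
by move: pY; rewrite -foldr_p; elim: ix {foldr_p} => //= i ix IH /Y_closed.
Qed.

Lemma indecomposable_sigma_words (one : X) l :
  ndi_solution r -> sigma_words r one l -> indecomposable r.
Proof.
move=> [_ nd _] words [Y1 [Y2 [[Y1_n0 Y2_n0 disj cover] [inv1 inv2]]]].
have one1 : one \in Y1.
  by apply: sigma_words_mem words _ Y1_n0 => x y;
    apply: nd_invariant_sigm_closed nd inv1 inv2 disj cover.
have one2 : one \in Y2.
  apply: sigma_words_mem words _ Y2_n0 => x y.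
  by apply: nd_invariant_sigm_closed nd inv2 inv1 _ _; rewrite 1?disjoint_sym 1?setUC.
by rewrite (disjointFr disj one1) in one2.
Qed.

End ConditionC.

Lemma iter_square_sol (X : finType) (r : X * X -> X * X) (one : X) l k :
  ndi_solution r -> irretractable r -> sigma_words r one l ->
  exists (Y : finType) (rY : Y * Y -> Y * Y) (oneY : Y),
    [/\ #|Y| = #|X| ^ (2 ^ k), ndi_solution rY, irretractable rY
      & sigma_words rY oneY l].
Proof.
move=> sol irr words; elim: k => [|k [Y [rY [oneY [card_Y sol_Y irr_Y words_Y]]]]].
  by exists X, r, one; rewrite expn1.
exists (Y * Y)%type, (prod_sol rY rY), (oneY, oneY); split.
- by rewrite card_prod card_Y -expnD addnn -mul2n -expnS.
- exact: ndi_prod_sol.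
- exact: irretractable_epi sol_Y (ndi_prod_sol sol_Y sol_Y) (sg_epi_fst rY rY oneY) irr_Y.
- exact: sigma_words_prod.
Qed.

Theorem corollary1 (n : nat) (hn : 0 < n) (r : 'I_n * 'I_n -> 'I_n * 'I_n) :
  ndi_solution r -> irretractable r -> indecomposable r ->
  condC r (Ordinal hn) ->
  forall k : nat, 1 <= k ->
    exists (Y : finType) (rY : Y * Y -> Y * Y),
      [/\ #|Y| = n ^ (2 ^ k), ndi_solution rY, irretractable rY & indecomposable rY].
Proof.
move=> sol irr _ [l words] k _.
have [Y [rY [oneY [card_Y sol_Y irr_Y words_Y]]]] := iter_square_sol k sol irr words.
exists Y, rY; split=> //; first by rewrite card_Y card_ord.
exact: indecomposable_sigma_words sol_Y words_Y.
Qed.
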